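(* Fix integers $k_1,k_2$ with $-1\le k_1\le k_2$ and $g\ge 4k_1+3$. Suppose $\overline{x}=(x_1,\ldots,x_{2k_1+1})\in\{1,2,3\}^{2k_1+1}$ satisfies: (1) whenever $i_1,i_2,i_3\in[1,2k_1+1]$ satisfy $i_1+i_2=i_3$, we have $(x_{i_1},x_{i_2},x_{i_3})\ne(1,1,3)$; (2) $a(\overline{x})+b(\overline{x})-c(\overline{x})=2k_1+1-k_2$; (3) $a(\overline{x})+2b(\overline{x})\le k_1+1$. Then the number of numerical semigroups $S$ with $g(S)=g$, $m(S)=g-k_1$, $e(S)=g-k_2$, and whose Kunz coordinate vector with respect to $m=m(S)$ has first $2k_1+1$ coordinates equal to $\overline{x}$, is \[\binom{g-3k_1-2}{k_1+1-a(\overline{x})-2b(\overline{x})}.\]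
   Context: A numerical semigroup $S$ is a submonoid of $\mathbb{N}_0$ with finite complement; $g(S)$ is the size of the complement, $m(S)$ the smallest nonzero element, $e(S)$ the size of the minimal generating set $(S\setminus\{0\})\setminus((S\setminus\{0\})+(S\setminus\{0\}))$. For $m=m(S)$, the Apéry set $\{s\in S: s-m\notin S\}$ contains exactly one element $a_i$ in each residue class $i$ mod $m$; writing $a_i=k_im+i$ for $1\le i\le m-1$, the Kunz coordinate vector of $S$ with respect to $m$ is $(k_1,\ldots,k_{m-1})$. For $\overline{x}=(x_1,\ldots,x_t)\in\{1,2,3\}^t$: $a(\overline{x})=\#\{i: x_i=2\}$, $b(\overline{x})=\#\{i: x_i=3\}$, $c(\overline{x})=\#\{i\in[1,t]: \exists j_1,j_2\in[1,t],\ j_1+j_2=i,\ (x_{j_1},x_{j_2},x_i)=(1,1,2)\}$. *)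

From mathcomp Require Import all_boot all_order all_algebra.
Set Implicit Arguments. Unset Strict Implicit. Unset Printing Implicit Defensive.
Import Order.TTheory GRing.Theory Num.Theory.

Definition is_numsg (S : nat -> bool) : Prop :=
  [/\ S 0, (forall a b, S a -> S b -> S (a + b)) & exists B, forall n, B <= n -> S n].

Definition genus_is (S : nat -> bool) (g : nat) : Prop :=
  exists B, (forall n, B <= n -> S n) /\ count (fun n => ~~ S n) (iota 0 B) = g.

Definition multiplicity_is (S : nat -> bool) (m : nat) : Prop :=
  [/\ 0 < m, S m & forall n, 0 < n < m -> ~~ S n].

Definition mingen (S : nat -> bool) (n : nat) : bool :=
  [&& S n, 0 < n & ~~ has (fun a => S a && S (n - a)) (iota 1 n.-1)].

Definition edim_is (S : nat -> bool) (e : nat) : Prop :=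
  exists B, (forall n, B <= n -> ~~ mingen S n) /\ count (mingen S) (iota 0 B) = e.

(* Apery set of S w.r.t. m: s in S with s - m not in S (s - m < 0 counts as not in S). *)
Definition apery (S : nat -> bool) (m n : nat) : bool :=
  S n && ((n < m) || ~~ S (n - m)).

Definition kunz_coord_is (S : nat -> bool) (m i k : nat) : bool :=
  apery S m (k * m + i).

Definition xi (x : seq nat) (i : nat) : nat := nth 0 x i.-1.

Definition a_of (x : seq nat) : nat := count (fun v => v == 2) x.
Definition b_of (x : seq nat) : nat := count (fun v => v == 3) x.
Definition c_of (x : seq nat) : nat :=
  let t := size x in
  count (fun i => (xi x i == 2) &&
           has (fun j1 => has (fun j2 => [&& j1 + j2 == i, xi x j1 == 1 & xi x j2 == 1])
                              (iota 1 t)) (iota 1 t))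
        (iota 1 t).

Definition num_sat (P : (nat -> bool) -> Prop) (N : nat) : Prop :=
  exists f : 'I_N -> (nat -> bool),
    [/\ forall i, P (f i),
        forall i j, f i =1 f j -> i = j &
        forall S, P S -> exists i, f i =1 S].

From mathcomp Require Import all_boot all_order all_algebra zify.
Set Implicit Arguments. Unset Strict Implicit. Unset Printing Implicit Defensive.

(* A numerical semigroup S with multiplicity m is determined by its Kunz vector w,
   w i * m + i being the least element of S congruent to i; S has genus \sum_i w i,
   so for m = g - k1 the excess \sum_(0 < i < m) (w i - 1) equals n = k1 + 1.
   The pigeonhole principle on the pairs (j, i - j) shows that when the excess is n,
   every i >= 2n with w i >= 2 is a sum of two residues with Kunz coordinate 1, and,
   as m >= 2n, that 3 m + i is never a minimal generator.  As the first 2n - 1 coordinates are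
   fixed to x, all later coordinates are 1 or 2, so S is encoded by the set A of the
   g - 3 k1 - 2 later positions where w = 2, and |A| = k1 + 1 - a - 2b is forced by
   the genus.  Conversely every such A gives a numerical semigroup, by hypothesis (1)
   and the bound w <= 3.  Finally m + i (w i = 1) is always a minimal generator and
   2 m + i (w i = 2) is one exactly when i is not a sum of two residues with
   coordinate 1, so e(S) = m - n + a + b - c, which is g - k2 by hypothesis (2). *)

Lemma count_sum (T : Type) (p : pred T) s : count p s = \sum_(v <- s) p v.
Proof. by rewrite -sum1_count big_mkcond. Qed.

Lemma count_iota_sum (p : pred nat) a n : count p (iota a n) = \sum_(a <= i < a + n) p i.
Proof. by rewrite count_sum /index_iota addnC addnK. Qed.

Lemma count_iota_mod (p : pred nat) m Q :
  count p (iota 0 (Q * m)) = \sum_(0 <= i < m) count (fun q => p (q * m + i)) (iota 0 Q).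
Proof.
elim: Q => [|Q IH]; first by rewrite big1.
rewrite mulSn addnC iotaD count_cat IH add0n.
under [in RHS]eq_bigr => i _ do rewrite -addn1 iotaD count_cat /= addn0.
rewrite big_split /= count_iota_sum -{1}(add0n (Q * m)) big_addn addKn.
by congr (_ + _); apply: eq_big_nat => i _; rewrite add0n addnC.
Qed.

Lemma count_iota_ltn w Q : count (fun q => q < w) (iota 0 Q) = minn w Q.
Proof. by elim: Q => [|Q IH]; rewrite ?minn0 // -addn1 iotaD count_cat IH /=; lia. Qed.

Lemma count_iota_single (p : pred nat) k Q :
  k < Q -> (forall q, p q -> q = k) -> count p (iota 0 Q) = p k.
Proof.
move=> kQ pk; case pk0: (p k).
  rewrite (eq_count (a2 := pred1 k)) ?count_uniq_mem ?iota_uniq ?mem_iota ?kQ //.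
  by move=> q /=; apply/idP/eqP => [/pk|->].
rewrite (eq_count (a2 := pred0)) ?count_pred0 // => q /=.
by apply/negbTE/negP => /[dup] /pk ->; rewrite pk0.
Qed.

Lemma leq_sum_pairs (E : nat -> nat) lo hi c :
  (forall j, lo <= j < hi -> c <= E j + E (lo + hi - 1 - j)) ->
  c * (hi - lo) <= 2 * \sum_(lo <= j < hi) E j.
Proof.
move=> H.
have rev : \sum_(lo <= j < hi) E j = \sum_(lo <= j < hi) E (lo + hi - 1 - j).
  by rewrite big_nat_rev; apply: eq_big_nat => j hj; congr E; lia.
rewrite mul2n -addnn {2}rev -big_split /= mulnC -sum_nat_const_nat.
by rewrite big_nat_cond [X in _ <= X]big_nat_cond; apply: leq_sum => j /andP[/H].
Qed.

Lemma big_nat_split_at (E : nat -> nat) a i b : a <= i < b ->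
  \sum_(a <= j < b) E j = \sum_(a <= j < i) E j + E i + \sum_(i.+1 <= j < b) E j.
Proof. by case/andP=> ai ib; rewrite (big_cat_nat ai (ltnW ib)) (big_ltn ib) /= addnA. Qed.

Lemma mingen_mem (S : nat -> bool) p : mingen S p -> S p.
Proof. by case/and3P. Qed.

Lemma mingenN_sum (S : nat -> bool) p a : 0 < a < p -> S a -> S (p - a) -> ~~ mingen S p.
Proof.
move=> hap Sa Sb; apply/negP => /and3P[_ _ /hasPn nodec].
have : a \in iota 1 p.-1 by rewrite mem_iota; lia.
by move/nodec; rewrite Sa Sb.
Qed.

Lemma genus_is_unique S g1 g2 : genus_is S g1 -> genus_is S g2 -> g1 = g2.
Proof.
suff ext B B' : B <= B' -> (forall n, B <= n -> S n) ->
    count (fun n => ~~ S n) (iota 0 B') = count (fun n => ~~ S n) (iota 0 B).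
  move=> [B1 [SB1 <-]] [B2 [SB2 <-]].
  by rewrite -(ext B1 (maxn B1 B2)) ?leq_maxl // -(ext B2 (maxn B1 B2)) ?leq_maxr.
move=> BB' SB; rewrite -(subnKC BB') iotaD count_cat add0n -[RHS]addn0; congr (_ + _).
apply/eqP; rewrite -leqn0 leqNgt -has_count; apply/hasPn => p.
by rewrite mem_iota => /andP[Bp _]; rewrite SB.
Qed.

Lemma eq_genus_is S S' g : S =1 S' -> genus_is S g -> genus_is S' g.
Proof.
move=> SS [B [SB <-]]; exists B; split=> [p /SB|]; first by rewrite SS.
by apply: eq_count => p /=; rewrite SS.
Qed.

Lemma eq_is_numsg S S' : S =1 S' -> is_numsg S -> is_numsg S'.
Proof.
move=> SS [S0 Sadd [B SB]]; split.
- by rewrite -SS.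
- by move=> p q; rewrite -!SS; apply: Sadd.
- by exists B => p /SB; rewrite SS.
Qed.

Definition split11 (w : nat -> nat) (i : nat) : bool :=
  has (fun j => (w j == 1) && (w (i - j) == 1)) (iota 1 i.-1).

Lemma eq_in_split11 w w' i :
  (forall j, 0 < j < i -> w j = w' j) -> split11 w i = split11 w' i.
Proof. by move=> ww; apply: eq_in_has => j; rewrite mem_iota => hj; rewrite !ww //; lia. Qed.

Definition kunz_sg (m : nat) (w : nat -> nat) (p : nat) : bool := w (p %% m) <= p %/ m.

Lemma kunz_sgE m w q j : j < m -> kunz_sg m w (q * m + j) = (w j <= q).
Proof.
move=> jm; have m0 : 0 < m by lia.
by rewrite /kunz_sg modnMDl modn_small // divnMDl // divn_small // addn0.
Qed.

Lemma eq_kunz_sg m w w' : 0 < m -> (forall i, i < m -> w i = w' i) ->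
  kunz_sg m w =1 kunz_sg m w'.
Proof. by move=> m0 ww p; rewrite /kunz_sg ww // ltn_mod. Qed.

Lemma kunz_sg_subadditive m w j l :
  is_numsg (kunz_sg m w) -> j + l < m -> w (j + l) <= w j + w l.
Proof.
case=> _ Sadd _ jlm.
have Sj : kunz_sg m w (w j * m + j) by rewrite kunz_sgE //; lia.
have Sl : kunz_sg m w (w l * m + l) by rewrite kunz_sgE //; lia.
by move: (Sadd _ _ Sj Sl); rewrite addnACA -mulnDl kunz_sgE.
Qed.

Lemma numsg_kunz_sg S m : is_numsg S -> 0 < m -> S m -> exists w, S =1 kunz_sg m w.
Proof.
case=> S0 Sadd [B SB] m0 Sm.
have Smul q : S (q * m) by elim: q => [|q IH]; rewrite ?mulSn ?Sadd.
have ex i : exists q, S (q * m + i) by exists B; apply: SB; have := leq_pmulr B m0; lia.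
suff Sq q i : S (q * m + i) = (ex_minn (ex i) <= q).
  by exists (fun i => ex_minn (ex i)) => p; rewrite {1}(divn_eq p m) Sq.
case: ex_minnP => q0 Sq0 minq; apply/idP/idP => [/minq //|le].
by rewrite -(subnK le) mulnDl -addnA Sadd.
Qed.

Lemma numsg_kunz_vector S m : is_numsg S -> multiplicity_is S m ->
  exists2 w, S =1 kunz_sg m w &
    [/\ w 0 = 0, forall j, 0 < j < m -> 0 < w j & exists d, forall j, j < m -> w j <= d].
Proof.
move=> numS [m_gt0 Sm noS]; have [w Sw] := numsg_kunz_sg numS m_gt0 Sm.
case: (eq_is_numsg Sw numS) => S0 _ [B SB]; exists w => //; split.
- by move: S0; rewrite /kunz_sg mod0n div0n leqn0 => /eqP.
- move=> j /[dup] /noS; rewrite Sw /kunz_sg -ltnNge => + /andP[_ jm].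
  by rewrite modn_small ?divn_small.
- exists B => j jm; move: (SB (B * m + j)); rewrite kunz_sgE //; apply.
  by have := leq_pmulr B m_gt0; lia.
Qed.

Section KunzSemigroup.
Variables (m : nat) (w : nat -> nat).
Hypotheses (m_gt0 : 0 < m) (w0 : w 0 = 0) (w_gt0 : forall j, 0 < j < m -> 0 < w j).
Local Notation S := (kunz_sg m w).

Lemma kunz_sg_m : S m.
Proof. by have := kunz_sgE w 1 m_gt0; rewrite mul1n addn0 w0 => ->. Qed.

Lemma kunz_sg_lt_m p : 0 < p < m -> ~~ S p.
Proof. by move=> hp; rewrite -[p]add0n -(mul0n m) kunz_sgE -?ltnNge ?w_gt0 //; lia. Qed.

Lemma kunz_sg_geq_m p : S p -> 0 < p -> m <= p.
Proof. by move=> Sp p0; rewrite leqNgt; apply: contraL Sp => pm; apply: kunz_sg_lt_m; lia. Qed.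

Lemma kunz_sg_multiplicity : multiplicity_is S m.
Proof. by split=> //; [exact: kunz_sg_m | exact: kunz_sg_lt_m]. Qed.

Lemma kunz_sg_kunz_coord i : 0 < i < m -> kunz_coord_is S m i (w i).
Proof.
move=> hi; have wi := w_gt0 hi.
rewrite /kunz_coord_is /apery kunz_sgE ?leqnn /=; last by case/andP: hi.
have -> : w i * m + i - m = (w i).-1 * m + i by case: (w i) wi => // k _; rewrite mulSn; lia.
rewrite kunz_sgE; last by case/andP: hi.
by rewrite -ltnNge ltn_predL wi orbT.
Qed.

Lemma kunz_coord_kunz_sg i k : 0 < i < m -> kunz_coord_is S m i k -> w i = k.
Proof.
move=> hi; have im : i < m by case/andP: hi.
rewrite /kunz_coord_is /apery kunz_sgE // => /andP[wk].
case: k wk => [|k] wk; first by have := w_gt0 hi; lia.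
rewrite mulSn -addnA addKn kunz_sgE // ltnNge leq_addr /= -ltnNge; lia.
Qed.

Lemma kunz_sg_mingen_off q i : i < m -> (0 < i) || (1 < q) -> q != w i ->
  ~~ mingen S (q * m + i).
Proof.
move=> im hq; case: (ltngtP q (w i)) => // qw _.
  by apply/negP => /mingen_mem; rewrite kunz_sgE // leqNgt qw.
case: q qw hq => [|q] // qw hq.
apply: (mingenN_sum (a := m)); first by rewrite mulSn; have := leq_addr (q * m) m; lia.
  exact: kunz_sg_m.
rewrite mulSn -addnA addKn kunz_sgE //; lia.
Qed.

Lemma kunz_sg_mingen_m : mingen S m.
Proof.
rewrite /mingen kunz_sg_m m_gt0; apply/hasPn => a; rewrite mem_iota => ha.
by rewrite negb_and -implybE; apply/implyP => Sa; apply: kunz_sg_lt_m; lia.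
Qed.

Lemma kunz_sg_mingen1 i : 0 < i < m -> w i = 1 -> mingen S (w i * m + i).
Proof.
move=> hi wi; rewrite /mingen kunz_sgE ?leqnn ?wi ?mul1n /=; last by case/andP: hi.
apply/andP; split; first by lia.
apply/hasPn => a; rewrite mem_iota => ha; rewrite negb_and -implybE; apply/implyP => Sa.
by apply: kunz_sg_lt_m; have := kunz_sg_geq_m Sa; lia.
Qed.

Lemma kunz_sg_mingen2 i : 0 < i < m -> w i = 2 -> mingen S (w i * m + i) = ~~ split11 w i.
Proof.
move=> hi wi; have im : i < m by case/andP: hi.
rewrite wi; apply/idP/idP.
- move=> gen; apply/hasPn => j; rewrite mem_iota => hj; apply/negP => /andP[/eqP wj /eqP wij].
  move: gen; apply/negP; apply: (mingenN_sum (a := 1 * m + j)); first by lia.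
    by rewrite kunz_sgE ?wj //; lia.
  by rewrite (_ : _ - _ = 1 * m + (i - j)) ?kunz_sgE ?wij //; lia.
move=> /hasPn nosplit; rewrite /mingen kunz_sgE ?wi // /=.
apply/andP; split; first by lia.
apply/hasPn => a; rewrite mem_iota => ha; apply/negP => /andP[Sa Sb].
have [ma mb] : m <= a /\ m <= 2 * m + i - a by split; apply: kunz_sg_geq_m => //; lia.
move: Sa Sb; have -> : 2 * m + i - a = 1 * m + (i - (a - m)) by lia.
have {1}-> : a = 1 * m + (a - m) by lia.
rewrite !kunz_sgE; [|lia|lia]; move=> wj wij.
case: (posnP (a - m)) => [j0|j0]; first by move: wij; rewrite j0 subn0 wi.
case: (ltngtP (a - m) i) => [ji|ji|ji]; last by move: wj; rewrite ji wi.
  have w1 : w (a - m) = 1 by have := w_gt0 (j := a - m); lia.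
  have w2 : w (i - (a - m)) = 1 by have := w_gt0 (j := i - (a - m)); lia.
  have j_in : a - m \in iota 1 i.-1 by rewrite mem_iota; lia.
  by move/negP: (nosplit _ j_in); apply; rewrite w1 w2.
lia.
Qed.

Lemma kunz_sg_mingen3 i : 0 < i < m -> w i = 3 -> mingen S (w i * m + i) ->
  (forall j, 0 < j < i -> w j = 1 -> 2 < w (i - j)) /\
  (forall j, i < j < m -> w j = 1 -> 1 < w (i + m - j)).
Proof.
move=> hi wi; rewrite wi => gen; split=> j hj wj; rewrite ltnNge; apply/negP => wij;
  move: gen; apply/negP; apply: (mingenN_sum (a := 1 * m + j)); try lia;
  rewrite ?kunz_sgE ?wj //; try lia.
- by rewrite (_ : _ - _ = 2 * m + (i - j)) ?kunz_sgE //; lia.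
- by rewrite (_ : _ - _ = 1 * m + (i + m - j)) ?kunz_sgE //; lia.
Qed.

Lemma kunz_sum_excess : \sum_(0 <= i < m) w i = \sum_(1 <= j < m) (w j).-1 + m.-1.
Proof.
rewrite big_ltn // w0 add0n -[m.-1]muln1 -[m.-1]subn1 -sum_nat_const_nat -big_split /=.
by apply: eq_big_nat => j hj; have := w_gt0 hj; lia.
Qed.

Section Bounded.
Variable d : nat.
Hypothesis w_le : forall j, j < m -> w j <= d.

Lemma kunz_sg_large p : d * m <= p -> S p.
Proof.
move=> hp; rewrite /kunz_sg; apply: leq_trans (w_le (ltn_pmod p m_gt0)) _.
by rewrite leq_divRL.
Qed.

Lemma kunz_sg_numsg :
  (forall j l, j + l < m -> w (j + l) <= w j + w l) ->
  (forall j l, j < m -> l < m -> m <= j + l -> w (j + l - m) <= (w j + w l).+1) ->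
  is_numsg S.
Proof.
move=> subadd wrap; split=> [|p q|]; last by exists (d * m); apply: kunz_sg_large.
  by rewrite /kunz_sg mod0n w0.
rewrite /kunz_sg => Sp Sq.
have ep := divn_eq p m; have eq := divn_eq q m.
have jm := ltn_pmod p m_gt0; have lm := ltn_pmod q m_gt0.
set j := p %% m in Sp ep jm *; set l := q %% m in Sq eq lm *.
set P := p %/ m in Sp ep *; set Q := q %/ m in Sq eq *.
case: (ltnP (j + l) m) => jl.
- have -> : p + q = (P + Q) * m + (j + l) by lia.
  rewrite -/(kunz_sg _ _ _) kunz_sgE //; have := subadd _ _ jl; lia.
- have -> : p + q = (P + Q).+1 * m + (j + l - m) by rewrite mulSn; lia.
  rewrite -/(kunz_sg _ _ _) kunz_sgE; last by lia.
  have := wrap _ _ jm lm jl; lia.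
Qed.

Lemma kunz_sg_genus : genus_is S (\sum_(0 <= i < m) w i).
Proof.
exists (d * m); split; first exact: kunz_sg_large.
rewrite count_iota_mod; apply: eq_big_nat => i /andP[_ im].
rewrite (eq_count (a2 := fun q => q < w i)) ?count_iota_ltn.
  exact/minn_idPl/w_le.
by move=> q /=; rewrite kunz_sgE // -ltnNge.
Qed.

Lemma kunz_sg_edim : edim_is S (1 + \sum_(1 <= i < m) mingen S (w i * m + i)).
Proof.
exists (d.+2 * m); split.
  move=> p; rewrite !mulSn => hp; apply: (mingenN_sum (a := m)); [lia|exact: kunz_sg_m|].
  by apply: kunz_sg_large; lia.
rewrite count_iota_mod big_ltn //; congr (_ + _).
  rewrite (count_iota_single (k := 1)) ?addn0 ?mul1n ?kunz_sg_mingen_m // => q.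
  case: q => [|[|q]] // gen; exfalso; move: gen; apply/negP.
    by rewrite mul0n /mingen /= andbF.
  by apply: kunz_sg_mingen_off; rewrite ?w0.
apply: eq_big_nat => i hi; apply: count_iota_single => [|q].
  by have := w_le (j := i); lia.
by apply: contraTeq => qw; apply: kunz_sg_mingen_off; lia.
Qed.

End Bounded.

Section Excess.
Variable n : nat.
Hypothesis excess : \sum_(1 <= j < m) (w j).-1 = n.

Lemma split11_excess i : 0 < i < m -> 1 < w i -> 2 * n <= i -> split11 w i.
Proof.
move=> hi wi ni; apply/negPn/negP => /hasPn nosplit.
(* Without a pair of 1s, every pair (j, i - j) carries excess at least 1. *)
have : 1 * (i - 1) <= 2 * \sum_(1 <= j < i) (w j).-1.
  apply: leq_sum_pairs => j hj; rewrite (_ : 1 + i - 1 - j = i - j); last by lia.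
  have := w_gt0 (j := j); have := w_gt0 (j := i - j).
  have := nosplit j; rewrite mem_iota (_ : 1 + i.-1 = i); last by lia.
  rewrite hj => /(_ isT) /nandP[] /eqP; lia.
have := big_nat_split_at (fun j => (w j).-1) hi; rewrite excess; lia.
Qed.

Lemma mingen3_excess i : 0 < i < m -> w i = 3 -> 2 * n <= m -> ~~ mingen S (w i * m + i).
Proof.
move=> hi wi nm; apply/negP => /(kunz_sg_mingen3 hi wi) [below above].
(* The pairs (j, i - j) then carry excess at least 2, the pairs (j, i + m - j) at least 1. *)
have lo : 2 * (i - 1) <= 2 * \sum_(1 <= j < i) (w j).-1.
  apply: leq_sum_pairs => j hj; rewrite (_ : 1 + i - 1 - j = i - j); last by lia.
  have := below j; have := below (i - j); rewrite (_ : i - (i - j) = j); last by lia.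
  have := w_gt0 (j := j); have := w_gt0 (j := i - j); lia.
have up : 1 * (m - i.+1) <= 2 * \sum_(i.+1 <= j < m) (w j).-1.
  apply: leq_sum_pairs => j hj; rewrite (_ : i.+1 + m - 1 - j = i + m - j); last by lia.
  have := above j; have := w_gt0 (j := j); have := w_gt0 (j := i + m - j); lia.
have := big_nat_split_at (fun j => (w j).-1) hi; rewrite excess wi; lia.
Qed.

End Excess.

End KunzSemigroup.

Lemma num_sat_bij (T : finType) (D : {set T}) (f : T -> nat -> bool) P :
  (forall A, A \in D -> P (f A)) -> {in D &, forall A B, f A =1 f B -> A = B} ->
  (forall S, P S -> exists2 A, A \in D & S =1 f A) ->
  num_sat P #|D|.
Proof.
move=> fP finj fonto; exists (fun i => f (enum_val i)); split.
- by move=> i; apply/fP/enum_valP.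
- by move=> i j fij; apply/enum_val_inj/finj => //; apply: enum_valP.
move=> S /fonto [A AD SA]; exists (enum_rank_in AD A) => p.
by rewrite enum_rankK_in.
Qed.

Lemma xi_range x i :
  all (fun v => 1 <= v <= 3) x -> 1 <= i <= size x -> 1 <= xi x i <= 3.
Proof. by move=> /allP xr /andP[i0 ix]; apply/xr/mem_nth; rewrite prednK. Qed.

Lemma sum_xi x (f : nat -> nat) : \sum_(1 <= i < (size x).+1) f (xi x i) = \sum_(v <- x) f v.
Proof. by rewrite big_add1 [in RHS](big_nth 0) /=; apply: eq_big_nat. Qed.

Lemma sum_pred_x x :
  all (fun v => 1 <= v <= 3) x -> \sum_(v <- x) v.-1 = a_of x + 2 * b_of x.
Proof.
move=> /allP xr; rewrite /a_of /b_of !count_sum big_distrr -big_split /=.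
by apply: eq_big_seq => v /xr; case: v => [|[|[|[|]]]].
Qed.

Lemma count1_a_b x : all (fun v => 1 <= v <= 3) x ->
  count (pred1 1) x + a_of x + b_of x = size x.
Proof.
move=> /allP xr; rewrite /a_of /b_of -[size x]count_predT !count_sum -!big_split /=.
by apply: eq_big_seq => v /xr; case: v => [|[|[|[|]]]].
Qed.

Lemma c_ofE x : c_of x = \sum_(1 <= i < (size x).+1) ((xi x i == 2) && split11 (xi x) i).
Proof.
rewrite /c_of /= count_iota_sum add1n; apply: eq_big_nat => i hi; congr (_ && _).
apply/hasP/hasP => [[j1 j1x /hasP[j2 j2x /and3P[/eqP ij x1 x2]]] | [j hj /andP[x1 x2]]].
- exists j1; first by move: j1x j2x; rewrite !mem_iota; lia.
  by rewrite (_ : i - j1 = j2) ?x1 ?x2 //; lia.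
- move: hj; rewrite mem_iota => hj; exists j; first by rewrite mem_iota; lia.
  apply/hasP; exists (i - j); first by rewrite mem_iota; lia.
  by rewrite x1 x2 andbT; apply/eqP; lia.
Qed.

Lemma c_of_le_a x : c_of x <= a_of x.
Proof.
rewrite c_ofE /a_of count_sum -(sum_xi x (fun v => (v == 2) : nat)).
by apply: leq_sum => i _; case: (_ == 2); rewrite ?leq_b1.
Qed.

Definition ext_vector (x : seq nat) R (A : {set 'I_R}) (i : nat) : nat :=
  if i == 0 then 0 else if i <= size x then xi x i
  else if i - (size x).+1 \in [seq val j | j in A] then 2 else 1.

Section ExtVector.
Variables (m : nat) (x : seq nat).
Local Notation t := (size x).
Local Notation R := (m - t.+1).
Local Notation w := (ext_vector x).
Implicit Types A B : {set 'I_R}.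

Lemma ext_vector_head A i : 0 < i <= t -> w A i = xi x i.
Proof. by case/andP=> i0 it; rewrite /ext_vector (negbTE (lt0n_neq0 i0)) it. Qed.

Lemma ext_vector_tail A i :
  t < i -> w A i = if i - t.+1 \in [seq val j | j in A] then 2 else 1.
Proof.
move=> ti; rewrite /ext_vector; have -> : (i == 0) = false by lia.
by have -> : (i <= t) = false by lia.
Qed.

Lemma ext_vector_tail_mem A (j : 'I_R) : w A (t.+1 + j) = if j \in A then 2 else 1.
Proof. by rewrite ext_vector_tail ?addKn ?mem_image //; [exact: val_inj | lia]. Qed.

Lemma ext_vector_tail_excess A : \sum_(t.+1 <= i < m) (w A i).-1 = #|A|.
Proof.
rewrite -{1}(add0n t.+1) big_addn big_mkord -sum1_card [RHS]big_mkcond /=.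
by apply: eq_bigr => j _; rewrite addnC ext_vector_tail_mem; case: (j \in A).
Qed.

Lemma ext_vector_inj A B : kunz_sg m (w A) =1 kunz_sg m (w B) -> A = B.
Proof.
move=> AB; apply/setP => j; have jm : t.+1 + j < m by have := ltn_ord j; lia.
move: (AB (1 * m + (t.+1 + j))); rewrite !kunz_sgE // !ext_vector_tail_mem.
by case: (j \in A); case: (j \in B).
Qed.

Hypothesis x_range : all (fun v => 1 <= v <= 3) x.

Lemma ext_vector_range A i : 0 < i -> 1 <= w A i <= 3.
Proof.
move=> i0; case: (leqP i t) => it; last by rewrite ext_vector_tail //; case: ifP.
by rewrite ext_vector_head ?i0 //; apply: xi_range; rewrite ?i0.
Qed.

Lemma ext_vector_gt0 A j : 0 < j < m -> 0 < w A j.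
Proof. by case/andP=> /(ext_vector_range A) /andP[]. Qed.

Lemma ext_vector_le3 A j : j < m -> w A j <= 3.
Proof. by case: (posnP j) => [->|/(ext_vector_range A) /andP[]]. Qed.

Lemma ext_vector_excess A :
  t < m -> \sum_(1 <= j < m) (w A j).-1 = a_of x + 2 * b_of x + #|A|.
Proof.
move=> tm; rewrite (big_cat_nat (n := t.+1)) //=.
rewrite ext_vector_tail_excess -sum_pred_x // -(sum_xi x predn); congr (_ + _).
by apply: eq_big_nat => i hi; rewrite ext_vector_head.
Qed.

Hypothesis x_no113 : forall i1 i2 i3 : nat, 1 <= i1 <= t -> 1 <= i2 <= t ->
  1 <= i3 <= t -> i1 + i2 = i3 -> (xi x i1, xi x i2, xi x i3) <> (1, 1, 3).

Lemma ext_vector_subadditive A j l : w A (j + l) <= w A j + w A l.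
Proof.
case: (posnP j) => [->|j0]; first by rewrite add0n leq_addl.
case: (posnP l) => [->|l0]; first by rewrite addn0 leq_addr.
have := ext_vector_range A j0; have := ext_vector_range A l0.
case: (leqP (j + l) t) => jlt; last by rewrite (ext_vector_tail A jlt); case: ifP; lia.
rewrite !ext_vector_head; try lia.
have no113 : xi x j = 1 -> xi x l = 1 -> xi x (j + l) != 3.
  move=> e1 e2; apply/eqP => e3.
  by apply: (x_no113 (i1 := j) (i2 := l) (i3 := j + l)); rewrite ?e1 ?e2 ?e3 //; lia.
have := xi_range (i := j + l) x_range; lia.
Qed.

Lemma ext_vector_wrap A j l : j < m -> l < m -> m <= j + l ->
  w A (j + l - m) <= (w A j + w A l).+1.
Proof.
move=> jm lm jlm; have := ext_vector_gt0 A (j := j); have := ext_vector_gt0 A (j := l).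
have := ext_vector_le3 A (j := j + l - m); lia.
Qed.

Section Construction.
Variable n : nat.
Hypotheses (m_gt0 : 0 < m) (n2_le_m : 2 * n <= m) (size_x : t = (2 * n).-1).
Hypothesis ab_le_n : a_of x + 2 * b_of x <= n.

Lemma size_lt_m : t < m.
Proof. lia. Qed.

Section Admissible.
Variable A : {set 'I_R}.
Hypothesis card_A : #|A| = n - (a_of x + 2 * b_of x).
Local Notation S := (kunz_sg m (w A)).

Lemma admissible_excess : \sum_(1 <= j < m) (w A j).-1 = n.
Proof. by rewrite ext_vector_excess ?size_lt_m // card_A; lia. Qed.

Lemma ext_vector_numsg : is_numsg S.
Proof.
apply: (kunz_sg_numsg (w := w A) m_gt0 erefl (ext_vector_le3 A)).
  by move=> j l _; apply: ext_vector_subadditive.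
exact: ext_vector_wrap.
Qed.

Lemma ext_vector_genus : genus_is S (m + n).-1.
Proof.
have := kunz_sg_genus m_gt0 (ext_vector_le3 A).
rewrite (kunz_sum_excess m_gt0 erefl (ext_vector_gt0 A)) admissible_excess.
by rewrite (_ : n + m.-1 = (m + n).-1) //; lia.
Qed.

Lemma ext_vector_kunz_coord i : 1 <= i <= t -> kunz_coord_is S m i (xi x i).
Proof.
move=> hi; rewrite -(ext_vector_head A hi).
by apply: (kunz_sg_kunz_coord m_gt0 erefl (ext_vector_gt0 A)); lia.
Qed.

Lemma ext_vector_mingen_head i : 0 < i <= t ->
  mingen S (w A i * m + i) + ((xi x i == 2) && split11 (xi x) i) =
  (xi x i == 1) + (xi x i == 2).
Proof.
move=> hi; have im : 0 < i < m by lia.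
have wi := ext_vector_head A hi.
have split_eq : split11 (w A) i = split11 (xi x) i.
  by apply: eq_in_split11 => j hj; apply: ext_vector_head; lia.
rewrite -wi -split_eq.
have : w A i = 1 \/ w A i = 2 \/ w A i = 3 by have := xi_range x_range hi; rewrite -wi; lia.
have w_gt0 := ext_vector_gt0 A.
case=> [w1|[w2|w3]].
- by rewrite (kunz_sg_mingen1 m_gt0 erefl w_gt0) // w1.
- by rewrite (kunz_sg_mingen2 m_gt0 erefl w_gt0) // w2; case: split11.
- by rewrite (negbTE (mingen3_excess m_gt0 erefl w_gt0 admissible_excess im _ _)) // w3.
Qed.

Lemma ext_vector_mingen_tail i : t < i < m -> mingen S (w A i * m + i) + (w A i).-1 = 1.
Proof.
move=> hi; have im : 0 < i < m by lia.
have [w1|w2] : w A i = 1 \/ w A i = 2 by rewrite ext_vector_tail; [case: ifP; auto | lia].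
  by rewrite (kunz_sg_mingen1 m_gt0 erefl (ext_vector_gt0 A)) ?w1.
rewrite (kunz_sg_mingen2 m_gt0 erefl (ext_vector_gt0 A)) ?w2 //.
by rewrite (split11_excess m_gt0 erefl (ext_vector_gt0 A) admissible_excess im) ?w2 //; lia.
Qed.

Lemma ext_vector_edim : edim_is S (m + a_of x + b_of x - c_of x - n).
Proof.
have := kunz_sg_edim m_gt0 erefl (ext_vector_gt0 A) (ext_vector_le3 A).
rewrite (big_cat_nat (n := t.+1)) /=; [|lia|exact: size_lt_m].
have head : \sum_(1 <= i < t.+1) mingen S (w A i * m + i) + c_of x =
            count (pred1 1) x + a_of x.
  rewrite c_ofE -big_split /=.
  under eq_big_nat => i hi do rewrite ext_vector_mingen_head //.
  by rewrite (sum_xi x (fun v => (v == 1) + (v == 2))) big_split /= -!count_sum.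
have tail : \sum_(t.+1 <= i < m) mingen S (w A i * m + i) + #|A| = R.
  rewrite -ext_vector_tail_excess -big_split /= (eq_big_nat _ _ ext_vector_mingen_tail).
  by rewrite sum_nat_const_nat muln1.
suff -> : m + a_of x + b_of x - c_of x - n =
    1 + (\sum_(1 <= i < t.+1) mingen S (w A i * m + i) +
         \sum_(t.+1 <= i < m) mingen S (w A i * m + i)) by [].
by have := count1_a_b x_range; have := c_of_le_a x; lia.
Qed.

End Admissible.

Lemma ext_vector_onto S :
  is_numsg S -> genus_is S (m + n).-1 -> multiplicity_is S m ->
  (forall i, 1 <= i <= t -> kunz_coord_is S m i (xi x i)) ->
  exists2 A : {set 'I_R}, #|A| = n - (a_of x + 2 * b_of x) &
    S =1 kunz_sg m (ext_vector x A).
Proof.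
move=> numS genS mulS kzS.
have [v Sv [v0 v_gt0 [d v_le]]] := numsg_kunz_vector numS mulS.
have excess : \sum_(1 <= j < m) (v j).-1 = n.
  have := genus_is_unique (eq_genus_is Sv genS) (kunz_sg_genus m_gt0 v_le).
  by rewrite (kunz_sum_excess m_gt0 v0 v_gt0); lia.
have v_head i : 0 < i <= t -> v i = xi x i.
  move=> hi; apply: (kunz_coord_kunz_sg m_gt0 v0 v_gt0); first by lia.
  by move: (kzS i hi); rewrite /kunz_coord_is /apery !Sv.
have v_tail i : t < i < m -> v i <= 2.
  move=> hi; rewrite leqNgt; apply/negP => v3.
  have /hasP [j] : split11 v i by apply: (split11_excess m_gt0 v0 v_gt0 excess); lia.
  rewrite mem_iota => hj /andP[/eqP vj /eqP vij].
  have := kunz_sg_subadditive (eq_is_numsg Sv numS) (j := j) (l := i - j).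
  by rewrite subnKC; lia.
pose A := [set j : 'I_R | v (t.+1 + j) == 2].
have agree i : i < m -> v i = ext_vector x A i.
  move=> im; case: (posnP i) => [->|i0]; first by rewrite v0.
  case: (leqP i t) => it; first by rewrite v_head ?ext_vector_head ?i0.
  have iR : i - t.+1 < R by lia.
  rewrite ext_vector_tail // -[i - t.+1]/(val (Ordinal iR)) mem_image; last exact: val_inj.
  by rewrite inE /= subnKC //; have := v_gt0 i; have := v_tail i; case: eqP; lia.
exists A; last by move=> p; rewrite Sv; apply: eq_kunz_sg.
have : \sum_(1 <= j < m) (v j).-1 = \sum_(1 <= j < m) (ext_vector x A j).-1.
  by apply: eq_big_nat => j hj; rewrite agree //; lia.
by rewrite excess ext_vector_excess //; lia.
Qed.

Lemma num_sat_kunz_prefix :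
  num_sat (fun S => [/\ is_numsg S, genus_is S (m + n).-1, multiplicity_is S m,
                        edim_is S (m + a_of x + b_of x - c_of x - n) &
                        forall i, 1 <= i <= size x -> kunz_coord_is S m i (xi x i)])
          'C(m - (size x).+1, n - (a_of x + 2 * b_of x)).
Proof.
rewrite -[m - _]card_ord -card_draws.
apply: num_sat_bij => [A | A B _ _ | S [numS genS mulS _ kzS]].
- rewrite inE => /eqP card_A.
  split; [exact: ext_vector_numsg | exact: ext_vector_genus card_A | |
          exact: ext_vector_edim card_A | exact: ext_vector_kunz_coord card_A].
  exact: kunz_sg_multiplicity m_gt0 erefl (ext_vector_gt0 A).
- exact: ext_vector_inj.
- have [A card_A SA] := ext_vector_onto numS genS mulS kzS.
  by exists A; rewrite ?inE ?card_A.
Qed.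

End Construction.

End ExtVector.

Import Order.TTheory GRing.Theory Num.Theory.
Local Open Scope ring_scope.

Theorem proposition8p7 (k1 k2 : int) (g : nat) (x : seq nat) :
  -1 <= k1 -> k1 <= k2 -> 4 * k1 + 3 <= g%:Z ->
  (size x)%:Z = Num.max 0 (2 * k1 + 1) ->
  all (fun v => (1 <= v <= 3)%N) x ->
  (forall i1 i2 i3 : nat, (1 <= i1 <= size x)%N -> (1 <= i2 <= size x)%N ->
     (1 <= i3 <= size x)%N -> (i1 + i2 = i3)%N ->
     (xi x i1, xi x i2, xi x i3) <> (1%N, 1%N, 3%N)) ->
  (a_of x)%:Z + (b_of x)%:Z - (c_of x)%:Z = 2 * k1 + 1 - k2 ->
  ((a_of x + 2 * b_of x)%N)%:Z <= k1 + 1 ->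
  num_sat (fun S => [/\ is_numsg S, genus_is S g,
                        multiplicity_is S (absz (g%:Z - k1)%R),
                        edim_is S (absz (g%:Z - k2)%R) &
                        forall i : nat, (1 <= i <= size x)%N ->
                          kunz_coord_is S (absz (g%:Z - k1)%R) i (xi x i)])
          'C(absz (g%:Z - 3 * k1 - 2)%R, absz (k1 + 1 - (a_of x)%:Z - 2 * (b_of x)%:Z)%R).
Proof.
move=> k1_ge k12 g_ge size_x x_range x_no113 abc ab_le.
pose n := absz (k1 + 1); pose m := (g + 1 - n)%N.
have k1E : k1 = n%:Z - 1 by rewrite /n gez0_abs; [rewrite addrK | lia].
have c_le_a := c_of_le_a x.
have size_x' : size x = (2 * n).-1 by move: size_x; rewrite k1E; case: (leP 0 _); lia.
have -> : absz (g%:Z - k1)%R = m by lia.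
have -> : absz (g%:Z - k2)%R = (m + a_of x + b_of x - c_of x - n)%N by lia.
have -> : absz (k1 + 1 - (a_of x)%:Z - 2 * (b_of x)%:Z)%R = (n - (a_of x + 2 * b_of x))%N.
  by lia.
have -> : 'C(absz (g%:Z - 3 * k1 - 2)%R, n - (a_of x + 2 * b_of x)) =
          'C(m - (size x).+1, n - (a_of x + 2 * b_of x)).
  by case: (posnP n) => [-> | n_gt0]; [rewrite sub0n !bin0 | congr 'C(_, _); lia].
have := num_sat_kunz_prefix (m := m) (n := n) x_range x_no113.
by rewrite (_ : (m + n).-1 = g); [apply => //; lia | lia].
Qed.
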